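(* Let $q$ be a power of $2$ and let $\alpha,\beta \in \mathbb{F}_{q^2}$ be such that the line $\{(\alpha t+\beta, t): t\}$ is not tangent to the Hermitian curve $x^q+x=y^{q+1}$. Let $\gamma = \beta + \beta^q$, $p(t) = t^{q+1} + \alpha^q t^q + \alpha t + \gamma$, let $\sigma_0,\dots,\sigma_q$ be the (distinct) roots of $p(t)$, and for $k \geq 0$ let $P_k = \sum_{i=0}^q \sigma_i^k$. Then for every integer $k \geq 0$, $P_{k+1} = \alpha^q P_k$ if and only if the remainder of $t^k$ upon division by $p(t)$ in $\mathbb{F}_{q^2}[t]$ has degree strictly less than $q$.
   Context: The roots $\sigma_i$ lie in an algebraic closure of $\mathbb{F}_{q^2}$ (in fact in $\mathbb{F}_{q^2}$, being the $t$-coordinates of the $q+1$ intersection points of the non-tangent line with the curve). *)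

From HB Require Import structures.
From mathcomp Require Import all_boot all_order all_algebra all_field.
Set Implicit Arguments. Unset Strict Implicit. Unset Printing Implicit Defensive.
Import GRing.Theory.
Local Open Scope ring_scope.

Definition on_hermitian (F : fieldType) (q : nat) (x y : F) : Prop :=
  x ^+ q + x = y ^+ q.+1.

Definition on_line (F : fieldType) (alpha beta x y : F) : Prop :=
  x = alpha * y + beta.

(* The line is tangent to H at (x0,y0): the point is on both, and the direction
   vector (alpha, 1) of the line is annihilated by the gradient of
   H(x,y) = x^q + x - y^(q+1) at (x0,y0), namely
   (q x0^(q-1) + 1, -(q+1) y0^q). *)
Definition tangent_at (F : fieldType) (q : nat) (alpha beta x0 y0 : F) : Prop :=
  [/\ on_hermitian q x0 y0, on_line alpha beta x0 y0 &
      alpha * (q%:R * x0 ^+ q.-1 + 1) + 1 * (- (q.+1%:R * y0 ^+ q)) = 0].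

Definition line_tangent (F : fieldType) (q : nat) (alpha beta : F) : Prop :=
  exists x0 y0, tangent_at q alpha beta x0 y0.

Definition herm_poly (F : fieldType) (q : nat) (alpha beta : F) : {poly F} :=
  'X ^+ q.+1 + (alpha ^+ q) *: 'X ^+ q + alpha *: 'X + (beta + beta ^+ q)%:P.

Definition power_sum (F : fieldType) (q : nat) (sigma : 'I_q.+1 -> F) (k : nat) : F :=
  \sum_(i < q.+1) sigma i ^+ k.

From HB Require Import structures.
From mathcomp Require Import all_boot all_order all_algebra all_field.
From mathcomp Require Import ring.
Set Implicit Arguments. Unset Strict Implicit. Unset Printing Implicit Defensive.
Import GRing.Theory.
Local Open Scope ring_scope.

(* In characteristic 2 the derivative of p is t^q + alpha, and
   p'(t) (t + alpha^q) = p(t) + D with D = alpha^(q+1) - gamma; D <> 0 because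
   otherwise the line would be tangent at (alpha^(q+1) + beta, alpha^q).  Euler's
   identity  sum_i f(sigma_i) / p'(sigma_i) = [t^q] f  for deg f <= q, applied to
   f = t^k mod p (so f(sigma_i) = sigma_i^k), gives
   P_(k+1) + alpha^q P_k = D [t^q] (t^k mod p), and in characteristic 2 the left
   side vanishes iff P_(k+1) = alpha^q P_k. *)

Lemma poly_eq0_at_inj_points (R : idomainType) (m : nat) (s : 'I_m -> R)
    (f : {poly R}) :
  injective s -> (size f <= m)%N -> (forall i, root f (s i)) -> f = 0.
Proof.
move=> s_inj size_f f_s; apply: (@roots_geq_poly_eq0 _ _ (map s (enum 'I_m))).
- by apply/allP=> _ /mapP[i _ ->].
- by rewrite map_inj_uniq ?enum_uniq.
- by rewrite size_map size_enum_ord.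
Qed.

Lemma coef_eq0_leq_size (R : nzSemiRingType) (m : nat) (f : {poly R}) :
  (size f <= m.+1)%N -> (f`_m == 0) = (size f <= m)%N.
Proof.
move=> size_f; have [size_le | size_gt] := leqP (size f) m.
  by rewrite nth_default ?eqxx.
have size_eq : size f = m.+1 by apply/eqP; rewrite eqn_leq size_f size_gt.
apply/negbTE.
by rewrite -[m]/(m.+1.-1) -size_eq -lead_coefE lead_coef_eq0 -size_poly_eq0 size_eq.
Qed.

Section LagrangeInterpolation.

Variables (F : fieldType) (m : nat) (s : 'I_m.+1 -> F) (p : {poly F}).
Hypotheses (s_inj : injective s) (p_monic : p \is monic)
  (size_p : size p = m.+2) (p_root : forall i, root p (s i)).

Let cofactor i := p %/ ('X - (s i)%:P).

Lemma cofactorK i : cofactor i * ('X - (s i)%:P) = p.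
Proof. by apply: divpK; rewrite -root_factor_theorem. Qed.

Lemma size_cofactor i : size (cofactor i) = m.+1.
Proof. by rewrite size_divp ?polyXsubC_eq0 // size_p size_XsubC. Qed.

Lemma lead_coef_cofactor i : (cofactor i)`_m = 1.
Proof.
have := congr1 lead_coef (cofactorK i).
by rewrite lead_coefM lead_coefXsubC mulr1 (monicP p_monic) /lead_coef size_cofactor.
Qed.

Lemma cofactor_root i j : i != j -> root (cofactor i) (s j).
Proof.
move=> neq_ij; have := p_root j.
rewrite -(cofactorK i) rootM root_XsubC => /orP[// | /eqP/s_inj eq_ji].
by rewrite eq_ji eqxx in neq_ij.
Qed.

Lemma cofactor_neq0 i : (cofactor i).[s i] != 0.
Proof.
apply/negP => cof_si; have cof_s j : root (cofactor i) (s j).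
  by have [<- // | /cofactor_root] := eqVneq i j; apply.
have := poly_eq0_at_inj_points s_inj _ cof_s.
by rewrite size_cofactor leqnn => /(_ isT)/eqP; rewrite -size_poly_eq0 size_cofactor.
Qed.

Lemma horner_deriv_root i : p^`().[s i] = (cofactor i).[s i].
Proof.
rewrite -{1}(cofactorK i) derivM derivXsubC mulr1 hornerD hornerM.
by rewrite hornerXsubC subrr mulr0 add0r.
Qed.

Lemma lagrange_interpolation (f : {poly F}) : (size f <= m.+1)%N ->
  f = \sum_i (f.[s i] / p^`().[s i]) *: cofactor i.
Proof.
move=> size_f; apply/eqP; rewrite -subr_eq0; apply/eqP.
apply: (poly_eq0_at_inj_points s_inj).
  apply: leq_trans (size_polyD _ _) _; rewrite geq_max size_f size_polyN.
  apply: (big_ind (fun r : {poly F} => size r <= m.+1)%N) => [|r r' ? ?|i _].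
  - by rewrite size_poly0.
  - by apply: leq_trans (size_polyD _ _) _; rewrite geq_max; apply/andP.
  - by apply: leq_trans (size_scale_leq _ _) _; rewrite size_cofactor.
move=> j; rewrite /root hornerD hornerN horner_sum (bigD1 j) //= big1.
  by rewrite hornerZ horner_deriv_root divfK ?cofactor_neq0 // addr0 subrr.
by move=> i neq_ij; rewrite hornerZ (rootP (cofactor_root neq_ij)) mulr0.
Qed.

Lemma sum_horner_div_deriv (f : {poly F}) : (size f <= m.+1)%N ->
  \sum_i f.[s i] / p^`().[s i] = f`_m.
Proof.
move=> size_f; rewrite {2}(lagrange_interpolation size_f) coef_sum.
by apply: eq_bigr => i _; rewrite coefZ lead_coef_cofactor mulr1.
Qed.

End LagrangeInterpolation.

Section HermitianPolynomial.

Variables (F : fieldType) (n q : nat) (alpha beta : F).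
Hypotheses (char2 : 2 \in [pchar F]) (q_def : q = (2 ^ n)%N) (n_gt0 : (0 < n)%N).

Local Notation p := (herm_poly q alpha beta).
Local Notation gamma := (beta + beta ^+ q).
Local Notation disc := (alpha * alpha ^+ q - gamma).

Lemma natr_pow2_eq0 : q%:R = 0 :> F.
Proof. by rewrite q_def natrX (pcharf0 char2) expr0n eqn0Ngt n_gt0. Qed.

Lemma exprD_pow2 (x y : F) : (x + y) ^+ q = x ^+ q + y ^+ q.
Proof.
apply: exprDn_pchar; rewrite (eq_pnat _ (pcharf_eq char2)) q_def pnatX.
by rewrite pnat_id.
Qed.

Lemma size_herm_poly_tail :
  (size (alpha ^+ q *: 'X^q + (alpha *: 'X + gamma%:P))%R < q.+2)%N.
Proof.
have q_gt0 : (0 < q)%N by rewrite q_def expn_gt0.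
apply: leq_ltn_trans (size_polyD _ _) _; rewrite gtn_max.
rewrite (leq_ltn_trans (size_scale_leq _ _)) ?size_polyXn //=.
apply: leq_ltn_trans (size_polyD _ _) _; rewrite gtn_max.
rewrite (leq_ltn_trans (size_scale_leq _ _)) ?size_polyX ?ltnS //=.
by rewrite (leq_trans (size_polyC_leq1 _)).
Qed.

Lemma size_herm_poly : size p = q.+2.
Proof. by rewrite /herm_poly -!addrA size_polyDl ?size_polyXn ?size_herm_poly_tail. Qed.

Lemma herm_poly_monic : p \is monic.
Proof.
rewrite monicE /herm_poly -!addrA lead_coefDl ?lead_coefXn //.
by rewrite size_polyXn size_herm_poly_tail.
Qed.

Lemma mulrn_pow2_eq0 (V : lmodType F) (v : V) : v *+ q = 0.
Proof. by rewrite -scaler_nat natr_pow2_eq0 scale0r. Qed.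

Lemma deriv_herm_poly : p^`() = 'X^q + alpha%:P.
Proof.
rewrite /herm_poly !derivD !derivZ !derivXn derivX derivC mulrSr.
by rewrite !mulrn_pow2_eq0 add0r scaler0 !addr0 alg_polyC.
Qed.

Lemma herm_deriv_root (x : F) : root p x -> p^`().[x] * (x + alpha ^+ q) = disc.
Proof.
move=> /rootP px0; rewrite -[disc]add0r -px0 deriv_herm_poly /herm_poly.
rewrite !(hornerD, hornerZ, hornerXn, hornerX, hornerC).
by rewrite exprS; ring.
Qed.

Lemma herm_disc_neq0 :
  alpha ^+ (q * q) = alpha -> ~ line_tangent q alpha beta -> disc != 0.
Proof.
set a := alpha ^+ q => a_q not_tangent; apply/eqP => disc0; apply: not_tangent.
have alpha_a : alpha * a = gamma by apply/eqP; rewrite -subr_eq0 disc0.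
have a_alpha : a ^+ q = alpha by rewrite -exprM a_q.
exists (alpha * a + beta), a; split => //.
- rewrite /on_hermitian !exprD_pow2 exprMn a_alpha exprS a_alpha -/a.
  have -> : a * alpha + beta ^+ q + (alpha * a + beta)
            = alpha * a + alpha * a + gamma by ring.
  by rewrite addrr_pchar2 // add0r -alpha_a mulrC.
- rewrite natr_pow2_eq0 mul0r add0r mulr1 -(addn1 q) natrD natr_pow2_eq0.
  by rewrite add0r !mul1r a_alpha subrr.
Qed.

Lemma size_modp_herm_poly (f : {poly F}) : (size (f %% p)%R <= q.+1)%N.
Proof. by rewrite -ltnS -size_herm_poly ltn_modp -size_poly_eq0 size_herm_poly. Qed.

Section PowerSums.

Variable (sigma : 'I_q.+1 -> F).
Hypotheses (sigma_inj : injective sigma) (sigma_root : forall i, root p (sigma i)).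
Hypothesis disc_neq0 : disc != 0.

Lemma power_sum_herm_roots (k : nat) :
  power_sum sigma k.+1 + alpha ^+ q * power_sum sigma k = disc * ('X^k %% p)`_q.
Proof.
set f := 'X^k %% p.
have f_sigma i : f.[sigma i] = sigma i ^+ k.
  have := congr1 (horner^~ (sigma i)) (divp_eq 'X^k p).
  by rewrite /= hornerXn hornerD hornerM (rootP (sigma_root i)) mulr0 add0r => ->.
rewrite -(sum_horner_div_deriv sigma_inj herm_poly_monic size_herm_poly sigma_root
  (size_modp_herm_poly _)).
rewrite /power_sum mulr_sumr -big_split mulr_sumr; apply: eq_bigr => i _ /=.
have deriv_disc := herm_deriv_root (sigma_root i).
have deriv_neq0 : p^`().[sigma i] != 0.
  by apply: contraNneq disc_neq0 => deriv0; rewrite -deriv_disc deriv0 mul0r.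
by rewrite f_sigma -deriv_disc exprS; field.
Qed.

Lemma power_sum_herm_rec (k : nat) :
  power_sum sigma k.+1 = alpha ^+ q * power_sum sigma k <->
  (size (modp 'X^k p) <= q)%N.
Proof.
rewrite -coef_eq0_leq_size ?size_modp_herm_poly //.
rewrite -(mulrI_eq0 _ (mulfI disc_neq0)) -power_sum_herm_roots.
by rewrite addr_eq0 (oppr_pchar2 char2); split => /eqP.
Qed.

End PowerSums.

End HermitianPolynomial.

Theorem mainTheorem4 (F : finFieldType) (n q : nat) (hq : q = (2 ^ n)%N)
  (hF : #|F| = (q ^ 2)%N) (alpha beta : F)
  (hnt : ~ line_tangent q alpha beta)
  (sigma : 'I_q.+1 -> F) (hinj : injective sigma)
  (hroot : forall i, root (herm_poly q alpha beta) (sigma i)) (k : nat) :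
  power_sum sigma k.+1 = alpha ^+ q * power_sum sigma k <->
  (size (modp ('X ^+ k) (herm_poly q alpha beta)) <= q)%N.
Proof.
have char2 : 2 \in [pchar F].
  by apply: (@card_finPcharP _ 2 (n * 2)); rewrite // hF hq expnM.
have n_gt0 : (0 < n)%N by move: (finNzRing_gt1 F); rewrite hF hq; case: (n).
have alpha_frob : alpha ^+ (q * q) = alpha by rewrite mulnn -hF expf_card.
have disc_neq0 := herm_disc_neq0 char2 hq n_gt0 alpha_frob hnt.
exact: (power_sum_herm_rec char2 hq n_gt0 hinj hroot disc_neq0 k).
Qed.
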